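(* Let $\mathbf L=(L,\vee,\wedge,0,1)$ be a complemented lattice with $0\ne1$ and $\Phi$ an equivalence relation on $L$ having the Substitution Property with respect to $\to$. Then: (i) $\Phi$ has the Substitution Property with respect to $^+$; (ii) $[1]\Phi$ is a deductive system of $\mathbf L$; (iii) $\Phi\subseteq\Theta([1]\Phi)$.
   Context: For $a\in L$, $a^+:=\{x\in L\mid a\vee x=1,\ a\wedge x=0\}$ (the set of all complements of $a$), and $a\to b:=\{x\vee(a\wedge b)\mid x\in a^+\}$. An equivalence relation $\Phi$ on $L$ has the Substitution Property with respect to $^+$ if $(a,b)\in\Phi$ implies $a^+\times b^+\subseteq\Phi$, and with respect to $\to$ if $(a,b)\in\Phi$ implies $(a\to c)\times(b\to c)\subseteq\Phi$ for all $c\in L$. A deductive system of $\mathbf L$ is a subset $D\subseteq L$ such that $1\in D$, and whenever $a\in D$, $b\in L$ and $a\to b\subseteq D$, then $b\in D$. For a deductive system $D$, $\Theta(D):=\{(x,y)\in L^2\mid x\to y\subseteq D\text{ and }y\to x\subseteq D\}$. $[1]\Phi$ is the $\Phi$-class of $1$. *)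

From HB Require Import structures.
From mathcomp Require Import all_boot all_order.
Set Implicit Arguments. Unset Strict Implicit. Unset Printing Implicit Defensive.
Import Order.TTheory.
Local Open Scope order_scope.

Section Defs.
Context {disp : Order.disp_t} {L : tbLatticeType disp}.

Definition complements (a : L) : L -> Prop :=
  fun x => a `|` x = \top /\ a `&` x = \bot.

Definition complemented : Prop := forall a : L, exists x, complements a x.

Definition arrow (a b : L) : L -> Prop :=
  fun y => exists x, complements a x /\ y = x `|` (a `&` b).

Definition is_equivalence (Phi : L -> L -> Prop) : Prop :=
  (forall x, Phi x x) /\ (forall x y, Phi x y -> Phi y x) /\
  (forall x y z, Phi x y -> Phi y z -> Phi x z).

Definition SP_compl (Phi : L -> L -> Prop) : Prop :=
  forall a b, Phi a b -> forall x y, complements a x -> complements b y -> Phi x y.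

Definition SP_arrow (Phi : L -> L -> Prop) : Prop :=
  forall a b c, Phi a b ->
    forall x y, arrow a c x -> arrow b c y -> Phi x y.

Definition deductive_system (D : L -> Prop) : Prop :=
  D \top /\ forall a b, D a -> (forall x, arrow a b x -> D x) -> D b.

Definition Theta (D : L -> Prop) (x y : L) : Prop :=
  (forall z, arrow x y z -> D z) /\ (forall z, arrow y x z -> D z).

Definition class_top (Phi : L -> L -> Prop) : L -> Prop := fun x => Phi x \top.

End Defs.

(* Three evaluations of the operation a -> c drive everything: a -> 0 = a^+,
   1 -> b = {b}, and a -> a = {1}.  So the Substitution Property for -> with
   c = 0 is the one for ^+; comparing a -> b with b -> b = {1} shows that
   (a, b) in Phi forces a -> b into [1]Phi, which gives (iii); and if a Phi 1
   then every element of a -> b is Phi-related to the unique element b of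
   1 -> b, so a -> b meeting [1]Phi puts b into [1]Phi, which gives (ii). *)
From HB Require Import structures.
From mathcomp Require Import all_boot all_order.
Set Implicit Arguments. Unset Strict Implicit. Unset Printing Implicit Defensive.
Import Order.TTheory.
Local Open Scope order_scope.

Section Arrow.
Context {disp : Order.disp_t} {L : tbLatticeType disp}.
Implicit Types a b x : L.

Lemma complements_top_bot : complements (\top : L) \bot.
Proof. by split; rewrite ?joinx0 ?meetx0. Qed.

Lemma arrow_bot a x : complements a x -> arrow a \bot x.
Proof. by exists x; rewrite meetx0 joinx0. Qed.

Lemma arrow_topl b : arrow \top b b.
Proof. by exists \bot; rewrite join0x meet1x; split=> //; exact: complements_top_bot. Qed.

Lemma arrow_refl_top a x : complements a x -> arrow a a \top.
Proof. by case=> ax_top ax_bot; exists x; rewrite meetxx joinC. Qed.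

Section Congruence.
Variable Phi : L -> L -> Prop.
Hypotheses (L_compl : complemented (L := L)) (Phi_equiv : is_equivalence Phi)
  (Phi_arrow : SP_arrow Phi).

Lemma SP_arrow_compl : SP_compl Phi.
Proof.
move=> a b ab x y ax bx; exact: Phi_arrow ab _ _ (arrow_bot ax) (arrow_bot bx).
Qed.

Lemma SP_arrow_class_top a b z : Phi a b -> arrow a b z -> class_top Phi z.
Proof.
move=> ab abz; have [u bu] := L_compl b.
exact: Phi_arrow ab _ _ abz (arrow_refl_top bu).
Qed.

Lemma SP_arrow_deductive_system : deductive_system (class_top Phi).
Proof.
have [Phi_refl [Phi_sym Phi_trans]] := Phi_equiv.
split=> [|a b a_top ab_top]; first exact: Phi_refl.
have [u au] := L_compl a.
have abz : arrow a b (u `|` (a `&` b)) by exists u.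
have z_b := Phi_arrow a_top abz (arrow_topl b).
exact: Phi_trans (Phi_sym _ _ z_b) (ab_top _ abz).
Qed.

Lemma SP_arrow_sub_Theta x y : Phi x y -> Theta (class_top Phi) x y.
Proof.
have [_ [Phi_sym _]] := Phi_equiv.
move=> xy; split=> z; first exact: SP_arrow_class_top xy.
exact: SP_arrow_class_top (Phi_sym _ _ xy).
Qed.

End Congruence.
End Arrow.

Theorem theorem6 (disp : Order.disp_t) (L : tbLatticeType disp)
  (Phi : L -> L -> Prop) :
  complemented (L := L) -> (\bot : L) <> \top ->
  is_equivalence Phi -> SP_arrow Phi ->
  SP_compl Phi /\ deductive_system (class_top Phi) /\
  (forall x y, Phi x y -> Theta (class_top Phi) x y).
Proof.
move=> L_compl _ Phi_equiv Phi_arrow.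
split; first exact: SP_arrow_compl.
split; first exact: SP_arrow_deductive_system.
exact: SP_arrow_sub_Theta.
Qed.
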